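(* Let $\mathcal G=(V_{\min},V_{\max},E,w,\lambda)$ be a discounted payoff game, not all of whose joint strategies are co-optimal, with contraction $\lambda^*$ and gap $\gamma$, and let $\mathcal G'=(V_{\min},V_{\max},E,w',\lambda)$ differ from $\mathcal G$ only in the edge weights, such that $|w_e-w'_e|\le\frac{1-\lambda^*}{3}\gamma$ for all $e\in E$. Then every joint strategy that is co-optimal for $\mathcal G'$ is also co-optimal for $\mathcal G$.
   Context: A discounted payoff game is a tuple $\mathcal G=(V_{\min},V_{\max},E,w,\lambda)$ with $V=V_{\min}\cup V_{\max}$ finite (disjoint union of Min and Max vertices), $E\subseteq V\times V$ with every vertex having an outgoing edge, $w:E\to\mathbb R$, $\lambda:E\to[0,1)$. The outcome of a play $e_0e_1\ldots$ is $\sum_{i\ge0}w_{e_i}\prod_{j<i}\lambda_{e_j}$. A joint strategy is a map $\sigma:V\to V$ with $(v,\sigma(v))\in E$; $\mathrm{val}(\sigma)(v)$ is the outcome of the play from $v$ following $\sigma$; the game value is $\mathrm{val}(\mathcal G)(v)=\sup_{\sigma_{\max}}\inf_{\sigma_{\min}}$ of the outcome from $v$ over positional strategies; $\sigma$ is co-optimal iff $\mathrm{val}(\sigma)=\mathrm{val}(\mathcal G)$. $\mathsf{offset}(x,(v,v'))=x(v)-(w_{(v,v')}+\lambda_{(v,v')}x(v'))$ if $v\in V_{\max}$, and $(w_{(v,v')}+\lambda_{(v,v')}x(v'))-x(v)$ otherwise. The contraction is $\lambda^*=\max\{\lambda_e\mid e\in E\}$. For a joint strategy $\sigma$ that is not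 co-optimal, $\gamma_\sigma=-\min\{\mathsf{offset}(\mathrm{val}(\sigma),e)\mid e\in E\}$ (which is $>0$); the gap $\gamma$ of $\mathcal G$ is the minimum of $\gamma_\sigma$ over all non-co-optimal joint strategies $\sigma$. *)

From HB Require Import structures.
From mathcomp Require Import all_boot all_order all_algebra.
From mathcomp Require Import all_classical all_reals all_analysis.
Set Implicit Arguments. Unset Strict Implicit. Unset Printing Implicit Defensive.
Import Order.TTheory GRing.Theory Num.Theory.
Import numFieldNormedType.Exports.
Local Open Scope classical_set_scope.
Local Open Scope ring_scope.

(* A discounted payoff game is given by: a finite vertex type V, a predicate
   isMax (V_max = isMax, V_min = complement), an edge relation E, edge weights
   w : V -> V -> R and discount factors lam : V -> V -> R (only their values on
   edges matter). *)

Section DPG.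
Variables (R : realType) (V : finType) (isMax : pred V) (E : rel V).

Definition dpg_wf (lam : V -> V -> R) :=
  (forall v, exists v', E v v') /\ (forall u v, E u v -> 0 <= lam u v < 1).

Definition joint_strategy (s : V -> V) := forall v, E v (s v).
Definition max_strategy (s : V -> V) := forall v, isMax v -> E v (s v).
Definition min_strategy (s : V -> V) := forall v, ~~ isMax v -> E v (s v).
Definition mix (smax smin : V -> V) : V -> V :=
  fun v => if isMax v then smax v else smin v.

Variables (w lam : V -> V -> R).

Definition play_term (s : V -> V) (v : V) (i : nat) : R :=
  w (iter i s v) (iter i.+1 s v) *
  \prod_(j < i) lam (iter j s v) (iter j.+1 s v).

Definition val_strat (s : V -> V) (v : V) : R := limn (series (play_term s v)).

Definition game_val (v : V) : R :=
  sup [set r | exists2 smax, max_strategy smax &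
     r = inf [set r' | exists2 smin, min_strategy smin &
                 r' = val_strat (mix smax smin) v]].

Definition co_optimal (s : V -> V) : Prop := forall v, val_strat s v = game_val v.

Definition offset (x : V -> R) (u v : V) : R :=
  if isMax u then x u - (w u v + lam u v * x v)
  else (w u v + lam u v * x v) - x u.

Definition gamma_strat (s : V -> V) : R :=
  - inf [set r | exists u v, E u v /\ r = offset (val_strat s) u v].

Definition gap : R :=
  inf [set r | exists s, [/\ joint_strategy s, ~ co_optimal s & r = gamma_strat s]].

End DPG.

Definition lam_star (R : realType) (V : finType) (E : rel V) (lam : V -> V -> R) : R :=
  sup [set r | exists u v, E u v /\ r = lam u v].

(* The value of a joint strategy is the fixed point of its one-step operator,
   a contraction of ratio c = lam_star; so perturbing the weights by at most
   delta = (1 - c) gamma / 3 moves every strategy value by at most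
   delta / (1 - c) = gamma / 3, and every offset by at most 2 gamma / 3.
   The game value has nonnegative offsets: a Min strategy minimising the total
   value against a fixed Max strategy, and a Max strategy maximising the total
   value against such best responses, admit no improving switch, and the
   resulting joint strategy is co-optimal.  Hence a strategy co-optimal for G'
   has all its offsets in G above -gamma, whereas a strategy that is not
   co-optimal for G has an offset at most -gamma. *)

From HB Require Import structures.
From mathcomp Require Import all_boot all_order all_algebra.
From mathcomp Require Import all_classical all_reals all_analysis.
From mathcomp Require Import ring lra.
Set Implicit Arguments.
Unset Strict Implicit.
Unset Printing Implicit Defensive.
Import Order.TTheory GRing.Theory Num.Theory.
Import numFieldNormedType.Exports.
Local Open Scope classical_set_scope.
Local Open Scope ring_scope.

Lemma normr_le_sum_normr (R : realType) (I : finType) (F : I -> R) i :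
  `|F i| <= \sum_j `|F j|.
Proof. by rewrite (bigD1 i) //= lerDl sumr_ge0. Qed.

Section StrategyValue.
Variables (R : realType) (V : finType) (E : rel V) (w lam : V -> V -> R).
Hypothesis lam01 : forall u v, E u v -> 0 <= lam u v < 1.

Lemma lam_le_lam_star u v : E u v -> lam u v <= lam_star E lam.
Proof.
move=> Euv; apply: ub_le_sup; last by exists u, v.
by exists 1 => _ [x [y [Exy ->]]]; have /andP[_ /ltW] := lam01 Exy.
Qed.

Lemma lam_star_lt1 : lam_star E lam < 1.
Proof.
pose c := \big[Order.max/0]_(p : V * V | E p.1 p.2) lam p.1 p.2.
apply: (@le_lt_trans _ _ c); last by apply: bigmax_lt => // p /lam01 /andP[].
rewrite /lam_star; have [->|/set0P ne] := eqVneq [set r | exists u v, E u v /\ r = lam u v] set0.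
  by rewrite sup0; exact: bigmax_ge_id.
apply: ge_sup => // _ [u [v [Euv ->]]].
exact: (@le_bigmax_cond _ _ _ 0 (u, v) (fun p => E p.1 p.2) (fun p => lam p.1 p.2)).
Qed.

Lemma play_term0 s v : play_term w lam s v 0 = w v (s v).
Proof. by rewrite /play_term big_ord0 mulr1. Qed.

Lemma play_termS s v i :
  play_term w lam s v i.+1 = lam v (s v) * play_term w lam s (s v) i.
Proof.
rewrite /play_term big_ord_recl /= -!iterSr.
under [in RHS]eq_bigr do rewrite -!iterSr.
by rewrite mulrCA.
Qed.

Lemma series_play_termS s v n :
  series (play_term w lam s v) n.+1 =
  w v (s v) + lam v (s v) * series (play_term w lam s (s v)) n.
Proof.
rewrite !seriesEord /= big_ord_recl /= play_term0 mulr_sumr.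
by congr (_ + _); apply: eq_bigr => i _; rewrite play_termS.
Qed.

Lemma is_cvg_series_play_term s v :
  joint_strategy E s -> cvgn (series (play_term w lam s v)).
Proof.
move=> js; set c := lam_star E lam; set W := \sum_(p : V * V) `|w p.1 p.2|.
have lam_le_c x : 0 <= lam x (s x) <= c.
  by have /andP[l0 _] := lam01 (js x); rewrite l0 lam_le_lam_star.
have c0 : 0 <= c by have /andP[l0 /(le_trans l0)] := lam_le_c v.
apply: normed_cvg; apply: (@series_le_cvg _ _ (geometric W c)) => [n|n|n|].
- exact: normr_ge0.
- by rewrite mulr_ge0 ?exprn_ge0 ?sumr_ge0.
- rewrite /= /play_term normrM /geometric; apply: ler_pM => //.
    exact: (normr_le_sum_normr (fun p : V * V => w p.1 p.2) (_, _)).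
  rewrite normr_prod -[in c ^+ n](card_ord n) -prodr_const; apply: ler_prod => i _.
  by rewrite normr_ge0 /=; have /andP[/ger0_norm -> ->] := lam_le_c (iter i s v).
- by apply: is_cvg_geometric_series; rewrite ger0_norm // lam_star_lt1.
Qed.

Lemma val_stratE s v : joint_strategy E s ->
  val_strat w lam s v = w v (s v) + lam v (s v) * val_strat w lam s (s v).
Proof.
move=> js; apply: cvg_lim => //; rewrite -cvg_shiftS.
under eq_fun do rewrite /= series_play_termS.
by apply: cvgD; [exact: cvg_cst | apply: cvgMl_tmp; exact: is_cvg_series_play_term].
Qed.

Lemma contracting_le0 s (d : V -> R) : joint_strategy E s ->
  (forall u, d u <= lam u (s u) * d (s u)) -> forall v, d v <= 0.
Proof.
move=> js hd v; case: (arg_maxP d (isT : predT v)) => v0 _ v0_max.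
apply: le_trans (v0_max v isT) _.
have /andP[l0 l1] := lam01 (js v0).
have : d v0 <= lam v0 (s v0) * d v0 := le_trans (hd v0) (ler_wpM2l l0 (v0_max _ isT)).
nra.
Qed.

Lemma le_val_strat s (y : V -> R) : joint_strategy E s ->
  (forall v, y v <= w v (s v) + lam v (s v) * y (s v)) ->
  forall v, y v <= val_strat w lam s v.
Proof.
move=> js hy v; rewrite -subr_le0.
apply: (contracting_le0 (d := fun u => y u - val_strat w lam s u) js _ v) => u.
by rewrite (val_stratE u js) mulrBr; have := hy u; lra.
Qed.

Lemma val_strat_le s (y : V -> R) : joint_strategy E s ->
  (forall v, w v (s v) + lam v (s v) * y (s v) <= y v) ->
  forall v, val_strat w lam s v <= y v.
Proof.
move=> js hy v; rewrite -subr_le0.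
apply: (contracting_le0 (d := fun u => val_strat w lam s u - y u) js _ v) => u.
by rewrite (val_stratE u js) mulrBr; have := hy u; lra.
Qed.

Lemma val_strat_lbounded :
  exists K, forall s, joint_strategy E s -> forall v, K <= val_strat w lam s v.
Proof.
set c := lam_star E lam; set W := \sum_(p : V * V) `|w p.1 p.2|.
have c1 : 0 < 1 - c by rewrite subr_gt0 lam_star_lt1.
have K0 : 0 <= W / (1 - c) by rewrite divr_ge0 ?sumr_ge0 ?ltW.
exists (- (W / (1 - c))) => s js; apply: le_val_strat => // x.
have /andP[l0 _] := lam01 (js x).
have := normr_le_sum_normr (fun p : V * V => w p.1 p.2) (x, s x).
rewrite ler_norml /= -/W => /andP[wx _].
have : lam x (s x) * (W / (1 - c)) <= c * (W / (1 - c)).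
  by apply: ler_wpM2r => //; exact: lam_le_lam_star (js x).
have : W / (1 - c) * (1 - c) = W by rewrite divfK // gt_eqF.
nra.
Qed.

Lemma sum_lt_sum_val_strat s (y : V -> R) u : joint_strategy E s ->
  (forall v, y v <= w v (s v) + lam v (s v) * y (s v)) ->
  y u < w u (s u) + lam u (s u) * y (s u) ->
  \sum_v y v < \sum_v val_strat w lam s v.
Proof.
move=> js hy hu; have y_le := le_val_strat js hy.
rewrite (bigD1 u) // [X in _ < X](bigD1 u) //=; apply: ltr_leD; last exact: ler_sum.
apply: lt_le_trans hu _; rewrite (val_stratE u js) lerD2l ler_wpM2l //.
by have /andP[] := lam01 (js u).
Qed.

Lemma sum_val_strat_lt_sum s (y : V -> R) u : joint_strategy E s ->
  (forall v, w v (s v) + lam v (s v) * y (s v) <= y v) ->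
  w u (s u) + lam u (s u) * y (s u) < y u ->
  \sum_v val_strat w lam s v < \sum_v y v.
Proof.
move=> js hy hu; have le_y := val_strat_le js hy.
rewrite (bigD1 u) // [X in _ < X](bigD1 u) //=; apply: ltr_leD; last exact: ler_sum.
apply: le_lt_trans hu; rewrite (val_stratE u js) lerD2l ler_wpM2l //.
by have /andP[] := lam01 (js u).
Qed.

End StrategyValue.

Lemma val_strat_le_shift (R : realType) (V : finType) (E : rel V) (w w' lam : V -> V -> R)
    (d : R) s :
  (forall u v, E u v -> 0 <= lam u v < 1) -> joint_strategy E s ->
  (forall u v, E u v -> `|w u v - w' u v| <= d) ->
  forall v, val_strat w lam s v <= val_strat w' lam s v + d / (1 - lam_star E lam).
Proof.
move=> lam01 js hw; apply: (val_strat_le lam01 js) => x.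
set c := lam_star E lam; set K := d / (1 - c).
have c1 : 0 < 1 - c by rewrite subr_gt0 lam_star_lt1.
have := hw _ _ (js x); rewrite ler_norml => /andP[_ wx].
have d0 : 0 <= d := le_trans (normr_ge0 _) (hw _ _ (js x)).
have K0 : 0 <= K by rewrite divr_ge0 // ltW.
have : lam x (s x) * K <= c * K := ler_wpM2r K0 (lam_le_lam_star lam01 (js x)).
have : K * (1 - c) = d by rewrite divfK // gt_eqF.
rewrite mulrBr mulr1 [K * c]mulrC (val_stratE w' lam01 x js) mulrDr; lra.
Qed.

Lemma val_strat_lipschitz (R : realType) (V : finType) (E : rel V) (w w' lam : V -> V -> R)
    (d : R) s :
  (forall u v, E u v -> 0 <= lam u v < 1) -> joint_strategy E s ->
  (forall u v, E u v -> `|w u v - w' u v| <= d) ->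
  forall v, `|val_strat w lam s v - val_strat w' lam s v| <= d / (1 - lam_star E lam).
Proof.
move=> lam01 js hw v; rewrite ler_norml.
have := val_strat_le_shift lam01 js hw v.
have : val_strat w' lam s v <= val_strat w lam s v + d / (1 - lam_star E lam).
  by apply: (val_strat_le_shift lam01 js) => x y Exy; rewrite distrC hw.
lra.
Qed.

Lemma offset_ge_perturbed (R : realType) (V : finType) (isMax : pred V)
    (w w' lam : V -> V -> R) (x x' : V -> R) (d K : R) u v :
  0 <= lam u v -> `|w u v - w' u v| <= d ->
  `|x u - x' u| <= K -> `|x v - x' v| <= K ->
  offset isMax w' lam x' u v - (d + (1 + lam u v) * K) <= offset isMax w lam x u v.
Proof.
move=> l0; rewrite !ler_norml => /andP[w1 w2] /andP[xu1 xu2] /andP[xv1 xv2].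
have : lam u v * (x v - x' v) <= lam u v * K by rewrite ler_wpM2l.
have : lam u v * (- K) <= lam u v * (x v - x' v) by rewrite ler_wpM2l.
rewrite /offset; case: (isMax u); rewrite !mulrBr mulrN; lra.
Qed.

Section Game.
Variables (R : realType) (V : finType) (isMax : pred V) (E : rel V) (w lam : V -> V -> R).
Hypothesis lam01 : forall u v, E u v -> 0 <= lam u v < 1.

Definition offsets_ge (x : V -> R) (b : R) :=
  forall u v, E u v -> b <= offset isMax w lam x u v.

Definition switch (s : {ffun V -> V}) (u v : V) : {ffun V -> V} :=
  [ffun x => if x == u then v else s x].

Lemma mix_joint_strategy t p :
  max_strategy isMax E t -> min_strategy isMax E p -> joint_strategy E (mix isMax t p).
Proof. by move=> ht hp v; rewrite /mix; case: ifPn => hv; [exact: ht | exact: hp]. Qed.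

Lemma co_optimal_offsets_ge0 s :
  joint_strategy E s -> offsets_ge (val_strat w lam s) 0 -> co_optimal isMax E w lam s.
Proof.
move=> js off v; set y := val_strat w lam s.
have smax : max_strategy isMax E s by move=> x _; exact: js.
have smin : min_strategy isMax E s by move=> x _; exact: js.
pose S t := [set r | exists2 p, min_strategy isMax E p &
                        r = val_strat w lam (mix isMax t p) v].
have [K leK] := val_strat_lbounded w lam01.
have inf_le t : max_strategy isMax E t -> inf (S t) <= y v.
  move=> ht; have js' := mix_joint_strategy ht smin.
  have lbS : has_lbound (S t).
    by exists K => _ [p hp ->]; exact: leK (mix_joint_strategy ht hp) v.
  apply: le_trans (ge_inf lbS (ex_intro2 _ _ s smin erefl)) _.
  apply: (val_strat_le lam01 js') => x; rewrite /mix; case: ifPn => hx.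
    by have := off _ _ (ht x hx); rewrite /offset hx subr_ge0.
  by rewrite [leRHS](val_stratE w lam01 x js).
have le_inf : y v <= inf (S s).
  apply: lb_le_inf; first by exists (val_strat w lam (mix isMax s s) v), s.
  move=> _ [p hp ->]; apply: (le_val_strat lam01 (mix_joint_strategy smax hp)) => x.
  rewrite /mix; case: ifPn => hx; first by rewrite [leLHS](val_stratE w lam01 x js).
  by have := off _ _ (hp x hx); rewrite /offset (negbTE hx) subr_ge0.
apply/eqP; rewrite eq_le; apply/andP; split.
  apply: (le_trans le_inf); apply: ub_le_sup; last by exists s.
  by exists (y v) => _ [t ht ->]; exact: inf_le.
by apply: ge_sup; [exists (inf (S s)), s | move=> _ [t ht ->]; exact: inf_le].
Qed.

Definition min_best_response (t p : V -> V) :=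
  min_strategy isMax E p /\
  forall u v, ~~ isMax u -> E u v ->
    val_strat w lam (mix isMax t p) u <= w u v + lam u v * val_strat w lam (mix isMax t p) v.

Lemma exists_min_best_response s0 t :
  joint_strategy E s0 -> max_strategy isMax E t ->
  exists p : {ffun V -> V}, min_best_response t p.
Proof.
move=> js0 ht.
pose P := [pred p : {ffun V -> V} | `[< min_strategy isMax E p >]].
have P0 : P [ffun x => s0 x] by apply/asboolP => x _; rewrite ffunE.
case: (arg_minP (fun p : {ffun V -> V} => \sum_x val_strat w lam (mix isMax t p) x) P0).
move=> p /asboolP hp p_min; exists p; split => // u v hu Euv.
rewrite leNgt; apply/negP => hlt.
have hp' : min_strategy isMax E (switch p u v).
  by move=> x hx; rewrite ffunE; case: eqP => [->|_] //; exact: hp.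
have /asboolP/p_min := hp'; rewrite leNgt => /negP; apply.
have js := mix_joint_strategy ht hp.
apply: (sum_val_strat_lt_sum lam01 (mix_joint_strategy ht hp') (u := u)).
  move=> x; rewrite /mix ffunE; case: ifPn => hx.
    by rewrite [leRHS](val_stratE w lam01 x js) /mix hx.
  case: eqP => [->|_]; first exact: ltW.
  by rewrite [leRHS](val_stratE w lam01 x js) /mix (negbTE hx).
by rewrite /mix (negbTE hu) ffunE eqxx.
Qed.

Lemma exists_offsets_ge0 s0 :
  joint_strategy E s0 -> exists2 s, joint_strategy E s & offsets_ge (val_strat w lam s) 0.
Proof.
move=> js0.
have br (t : {ffun V -> V}) :
    exists p : {ffun V -> V}, max_strategy isMax E t -> min_best_response t p.
  have [ht|nht] := pselect (max_strategy isMax E t); last by exists t => /nht.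
  by have [p hp] := exists_min_best_response js0 ht; exists p.
have [f hf] := choice br.
pose P := [pred t : {ffun V -> V} | `[< max_strategy isMax E t >]].
have P0 : P [ffun x => s0 x] by apply/asboolP => x _; rewrite ffunE.
case: (arg_maxP (fun t : {ffun V -> V} => \sum_x val_strat w lam (mix isMax t (f t)) x) P0).
move=> t /asboolP ht t_max; have [hp br_t] := hf t ht.
have js := mix_joint_strategy ht hp.
exists (mix isMax t (f t)) => // u v Euv; rewrite /offset; case: ifPn => hu; last first.
  by rewrite subr_ge0; exact: br_t.
rewrite subr_ge0 leNgt; apply/negP => hlt.
have ht' : max_strategy isMax E (switch t u v).
  by move=> x hx; rewrite ffunE; case: eqP => [->|_] //; exact: ht.
have [hp' _] := hf _ ht'.
have /asboolP/t_max := ht'; rewrite /= leNgt => /negP; apply.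
apply: (sum_lt_sum_val_strat lam01 (mix_joint_strategy ht' hp') (u := u)).
  move=> x; rewrite /mix ffunE; case: ifPn => hx; last exact: br_t (hp' x hx).
  case: eqP => [->|_]; first exact: ltW.
  by rewrite [leLHS](val_stratE w lam01 x js) /mix hx.
by rewrite /mix hu ffunE eqxx.
Qed.

Lemma game_val_offsets_ge0 s0 :
  joint_strategy E s0 -> offsets_ge (game_val isMax E w lam) 0.
Proof.
move=> js0; have [s js off] := exists_offsets_ge0 js0.
have co := co_optimal_offsets_ge0 js off.
by have <- : val_strat w lam s = game_val isMax E w lam by apply: funext.
Qed.

Lemma gamma_strat_le s b u v : E u v ->
  offsets_ge (val_strat w lam s) b -> gamma_strat isMax E w lam s <= - b.
Proof.
move=> Euv off; rewrite /gamma_strat lerN2; apply: lb_le_inf.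
  by exists (offset isMax w lam (val_strat w lam s) u v), u, v.
by move=> _ [x [y [Exy ->]]]; exact: off.
Qed.

Lemma gap_le_gamma_strat s : 0 < gap isMax E w lam ->
  joint_strategy E s -> ~ co_optimal isMax E w lam s ->
  gap isMax E w lam <= gamma_strat isMax E w lam s.
Proof.
rewrite /gap; set S := [set r | _] => gap_gt0 js nco.
have [lbS|nlbS] := pselect (has_lbound S); first by apply: (ge_inf lbS); exists s.
by move: gap_gt0; rewrite inf_out ?ltxx // => -[_].
Qed.

End Game.

Theorem lemma4p5 (R : realType) (V : finType) (isMax : pred V) (E : rel V)
    (w w' lam : V -> V -> R) :
  dpg_wf E lam ->
  (exists s, joint_strategy E s /\ ~ co_optimal isMax E w lam s) ->
  (forall u v, E u v ->
     `|w u v - w' u v| <= (1 - lam_star E lam) / 3 * gap isMax E w lam) ->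
  forall s, joint_strategy E s -> co_optimal isMax E w' lam s ->
    co_optimal isMax E w lam s.
Proof.
move=> [_ lam01] _ hw s js co'; apply: contrapT => nco.
have /existsNP [v _] := nco.
set c := lam_star E lam; set gp := gap isMax E w lam.
have c1 : 0 < 1 - c by rewrite subr_gt0 lam_star_lt1.
have gp0 : 0 <= gp.
  by have := le_trans (normr_ge0 _) (hw _ _ (js v)); rewrite pmulr_rge0 // divr_gt0.
have val_dist x : `|val_strat w lam s x - val_strat w' lam s x| <= gp / 3.
  have -> : gp / 3 = (1 - c) / 3 * gp / (1 - c) by field; rewrite gt_eqF.
  exact: val_strat_lipschitz.
have off' : offsets_ge isMax E w' lam (val_strat w' lam s) 0.
  have -> : val_strat w' lam s = game_val isMax E w' lam by apply: funext.
  exact: game_val_offsets_ge0 js.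
have off : offsets_ge isMax E w lam (val_strat w lam s) (- (gp * 2 / 3)).
  move=> x y Exy; have /andP[l0 _] := lam01 _ _ Exy.
  have := offset_ge_perturbed isMax l0 (hw _ _ Exy) (val_dist x) (val_dist y).
  rewrite -/c -/gp.
  have := off' _ _ Exy; have : lam x y <= c := lam_le_lam_star lam01 Exy.
  nra.
move: gp0; rewrite le_eqVlt => /predU1P[gp_eq0|gp_gt0].
  by apply/nco/(co_optimal_offsets_ge0 lam01 js); rewrite -gp_eq0 !mul0r oppr0 in off.
have := gap_le_gamma_strat gp_gt0 js nco.
have := gamma_strat_le (js v) off.
lra.
Qed.
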